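(* Let $A=(a_1,\dots,a_k)$ be a telescopic sequence of positive integers which is minimal, i.e. no $a_i$ is an $\mathbb{N}_0$-linear combination of the other $a_j$. If $\gcd(a_i,a_j)=1$ for some $i<j$, then $j=k$.
   Context: For a sequence $A=(a_1,\dots,a_k)$ of non-negative integers, let $d_i=\gcd(a_1,\dots,a_i)$ and $S_i=\langle a_1,\dots,a_i\rangle$ (the set of $\mathbb{N}_0$-linear combinations of $a_1,\dots,a_i$) for $i\in\{1,\dots,k\}$, and let $c_j=d_{j-1}/d_j$ for $j\in\{2,\dots,k\}$. The sequence $A$ is telescopic if $c_ja_j\in S_{j-1}$ for all $j\in\{2,\dots,k\}$. *)

(* Sequences A = (a_1,...,a_k) are represented as s : seq nat,
   with a_i = nth 0 s (i-1) (0-indexed positions internally). *)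
From mathcomp Require Import all_boot.
Set Implicit Arguments. Unset Strict Implicit. Unset Printing Implicit Defensive.

Definition in_semigroup (s : seq nat) (x : nat) : Prop :=
  exists coef : nat -> nat, x = \sum_(j < size s) coef j * nth 0 s j.

Definition prefix_gcd (s : seq nat) (i : nat) : nat :=
  \big[gcdn/0]_(j < i) nth 0 s j.

(* telescopic: for all j in {2..k}, c_j a_j \in S_{j-1}, c_j = d_{j-1}/d_j.
   In 0-indexed position p = j-1 with 1 <= p < k. *)
Definition telescopic (s : seq nat) : Prop :=
  forall p, 0 < p < size s ->
    in_semigroup (take p s)
      ((prefix_gcd s p %/ prefix_gcd s p.+1) * nth 0 s p).

Definition drop_at (s : seq nat) (i : nat) : seq nat := take i s ++ drop i.+1 s.

Definition minimal_seq (s : seq nat) : Prop :=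
  forall i, i < size s -> ~ in_semigroup (drop_at s i) (nth 0 s i).

(* Since a_i and a_j are coprime, every prefix gcd d_m with m > j equals 1.
   If j < k, the telescopic condition at a_{j+1} therefore reads
   1 * a_{j+1} in S_j, which exhibits a_{j+1} as a combination of the other
   entries and contradicts minimality. *)
From mathcomp Require Import all_boot.
From mathcomp Require Import zify.

Lemma prefix_gcd_dvd (s : seq nat) n k : k < n -> prefix_gcd s n %| nth 0 s k.
Proof.
move=> lt_kn; rewrite /prefix_gcd (bigD1 (Ordinal lt_kn)) //=.
exact: dvdn_gcdl.
Qed.

Lemma prefix_gcd_coprime (s : seq nat) n i j : i < n -> j < n ->
  gcdn (nth 0 s i) (nth 0 s j) = 1 -> prefix_gcd s n = 1.
Proof.
move=> lt_in lt_jn gcd_ij; apply/eqP.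
by rewrite -dvdn1 -gcd_ij dvdn_gcd !prefix_gcd_dvd.
Qed.

Lemma in_semigroup_catr (s t : seq nat) x :
  in_semigroup s x -> in_semigroup (s ++ t) x.
Proof.
move=> [c ->]; exists (fun j => if j < size s then c j else 0).
rewrite -(big_mkord xpredT (fun j => c j * nth 0 s j)).
rewrite -(big_mkord xpredT (fun j => (if j < size s then c j else 0) * nth 0 (s ++ t) j)).
rewrite size_cat [RHS](@big_cat_nat _ _ _ (size s)) ?leq_addr //=.
rewrite [X in _ + X]big_nat_cond [X in _ + X]big1 ?addn0.
  by apply: eq_big_nat => k /andP[_ lt_ks]; rewrite lt_ks nth_cat lt_ks.
by move=> k /andP[/andP[le_sk _] _]; rewrite ltnNge le_sk.
Qed.

Theorem mainTheorem11 (A : seq nat) :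
  all (fun a => 0 < a) A ->
  telescopic A ->
  minimal_seq A ->
  forall i j, i < j -> j < size A ->
    gcdn (nth 0 A i) (nth 0 A j) = 1 ->
    j = (size A).-1.
Proof.
move=> _ telA minA i j lt_ij lt_jA gcd_ij.
case: (eqVneq j (size A).-1) => // ne_j_last.
have lt_j1A : j.+1 < size A by lia.
have := telA j.+1 lt_j1A.
rewrite (@prefix_gcd_coprime A j.+1 i j) ?(@prefix_gcd_coprime A j.+2 i j);
  try lia.
rewrite divnn mul1n => /(@in_semigroup_catr _ (drop j.+2 A)).
by move/minA: lt_j1A.
Qed.
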